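(* Let $X$ be a connected precolored graph and $Y$ any precolored graph. Then $A(\overline X*Y)=A(X*Y)$, i.e. the two quotients of $A(X_{N})$ ($N$ the number of vertices of $X*Y$) defined by $\overline X*Y$ and by $X*Y$ coincide (the identity on generators induces an isomorphism).
   Context: A precolored graph $X=(V,E)$ is a finite set $V$ with a family $E=\{E_1,\dots,E_p\}$ of disjoint subsets of $V\times V-\Delta_V$. Its completion $\overline X=(V,\overline E)$ is the colored graph with partition $\overline E=\{E_1,\dots,E_p,E_{p+1}\}$ of $V\times V-\Delta_V$, where $E_{p+1}$ is the set of remaining (missing) pairs. $X$ is connected if the oriented graph $(V,\bigcup_iE_i)$ is connected disregarding orientations. For a colored graph with partition $\{C_1,\dots,C_\ell\}$ on $N$ vertices, its Laplacian is $d_{xx}=0$, $d_{xy}=c(k)$ for $(x,y)\in C_k$ ($c$ injective into ${\mathbb C}$), and $A(\cdot)$ is the quotient of $A(X_N)$ (the universal C*-algebra generated by the entries of an $N\times N$ magic biunitary $w$, i.e. projections with rows and columns summing to $1$) by $wd=dw$; for a precolored graph $X$, $A(X):=A(\overline X)$. Free product (also for precolored graphs): for $X=(T,\{E_r\}_{r\le p})$, $Y=(Z,\{F_s\}_{s\le q})$, $X*Y=(T\times Z,\{E_r^\circ\}\cup\{F_s^\circ\})$ with $E_r^\circ=\{(i\alpha,j\alpha)\mid(i,j)\in E_r,\alpha\in Z\}$, $F_s^\circ=\{(i\alpha,j\beta)\mid i,j\in T,(\alpha,\beta)\in F_s\}$. *)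

From HB Require Import structures.
From mathcomp Require Import all_boot all_order all_algebra.
From mathcomp Require Import complex.
From mathcomp Require Import Rstruct.
Set Implicit Arguments. Unset Strict Implicit. Unset Printing Implicit Defensive.
Import Order.TTheory GRing.Theory Num.Theory.
Local Open Scope ring_scope.

Definition CC := (Rdefinitions.R)[i].
Definition modc (z : CC) : Rdefinitions.R := Normc.normc z.

Record cstar_structure (A : algType CC) := CStar {
  cstar : A -> A;
  cnorm : A -> Rdefinitions.R;
  cstarD : forall x y, cstar (x + y) = cstar x + cstar y;
  cstarZ : forall (a : CC) x, cstar (a *: x) = (a^*)%C *: cstar x;
  cstarM : forall x y, cstar (x * y) = cstar y * cstar x;
  cstarK : forall x, cstar (cstar x) = x;
  cnorm_ge0 : forall x, 0 <= cnorm x;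
  cnorm_eq0 : forall x, cnorm x = 0 -> x = 0;
  cnormD : forall x y, cnorm (x + y) <= cnorm x + cnorm y;
  cnormZ : forall (a : CC) x, cnorm (a *: x) = modc a * cnorm x;
  cnormM : forall x y, cnorm (x * y) <= cnorm x * cnorm y;
  cnorm_cstar : forall x, cnorm (cstar x * x) = cnorm x ^+ 2;
  cnorm_complete : forall u : nat -> A,
    (forall e : Rdefinitions.R, 0 < e ->
       exists N, forall m n, (N <= m)%N -> (N <= n)%N -> cnorm (u m - u n) < e) ->
    exists l : A, forall e : Rdefinitions.R, 0 < e ->
       exists N, forall n, (N <= n)%N -> cnorm (u n - l) < e
}.

Definition magic_biunitary (A : algType CC) (S : cstar_structure A) (V : finType)
  (w : V -> V -> A) : Prop :=
  [/\ forall i j, cstar S (w i j) = w i j,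
      forall i j, w i j * w i j = w i j,
      forall i, \sum_j w i j = 1
    & forall j, \sum_i w i j = 1].

(* A colored graph with l colors: col x y is the class C_k of (x,y) for     *)
(* x <> y (the value on the diagonal is irrelevant).                        *)
(* A precolored graph with p colors: pcol x y = Some r iff (x,y) is in E_r, *)
(* None iff (x,y) is in no E_r (value on the diagonal irrelevant, since     *)
(* the E_r are subsets of V x V minus the diagonal).                        *)
Definition colored (V : finType) (l : nat) := V -> V -> 'I_l.
Definition precolored (V : finType) (p : nat) := V -> V -> option 'I_p.

(* Completion: the missing pairs get the new color p+1 (index p). *)
Definition completion (V : finType) (p : nat) (X : precolored V p) : colored V p.+1 :=
  fun x y => match X x y with
             | Some r => widen_ord (leqnSn p) r
             | None => ord_max
             end.

Definition completion_pre (V : finType) (p : nat) (X : precolored V p)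
  : precolored V p.+1 := fun x y => Some (completion X x y).

Definition laplacian (V : finType) (l : nat) (X : colored V l) (c : 'I_l -> CC)
  : V -> V -> CC := fun x y => if x == y then 0 else c (X x y).

Definition commutes_with (A : algType CC) (V : finType) (w : V -> V -> A)
  (d : V -> V -> CC) : Prop :=
  forall i k, \sum_j w i j * (d j k *: 1) = \sum_j (d i j *: 1) * w j k.

Definition pedge (V : finType) (p : nat) (X : precolored V p) : rel V :=
  fun x y => ((x != y) && (X x y != None)) || ((y != x) && (X y x != None)).
Definition pconnected (V : finType) (p : nat) (X : precolored V p) : Prop :=
  forall x y : V, connect (pedge X) x y.

(* Free product of precolored graphs: vertex set T x Z, colors E_r^o        *)
(* (indices 0..p-1) followed by F_s^o (indices p..p+q-1).                   *)
Definition pfree (T Z : finType) (p q : nat) (X : precolored T p) (Y : precolored Z q)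
  : precolored (T * Z)%type (p + q) :=
  fun x y =>
    let: (i, a) := x in let: (j, b) := y in
    if a == b then omap (@lshift p q) (X i j)
    else omap (@rshift p q) (Y a b).

Definition rel_A (A : algType CC) (V : finType) (p : nat) (X : precolored V p)
  (c : 'I_p.+1 -> CC) (w : V -> V -> A) : Prop :=
  commutes_with w (laplacian (completion X) c).

From mathcomp Require Import all_boot all_order all_algebra.
From mathcomp Require Import cyclic separable cyclotomic.
From mathcomp Require Import complex Rstruct ring lra zify.
Import Order.TTheory GRing.Theory Num.Theory.
Local Open Scope ring_scope.
Set Implicit Arguments. Unset Strict Implicit. Unset Printing Implicit Defensive.

(* Say that w preserves f : V -> V -> U when w_ij w_kl = 0 whenever
   f(i,k) <> f(j,l).  The entries of each row and each column of a magic
   biunitary are mutually orthogonal projections, so w commutes with a matrix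
   d iff w preserves d; for the Laplacian of a coloring (with injective color
   values) this means that w preserves the off-diagonal coloring.
   Preservation passes to coarser functions, to pairs, to converse relations
   and, using the row and column sums, from a relation to its connectedness
   relation.  The coloring of Xbar * Y is that of X * Y refined by the
   relation "same Z-coordinate"; when X is connected, this relation is the
   connectedness relation of the edges of X * Y colored by X, which w
   preserves as soon as it preserves the coloring of X * Y.

   Orthogonality of projections summing to 1 is derived from the norm alone:
   for a projection e and a self-adjoint c in eAe with |e + c|, |e - c| <= 1,
   the C*-identity gives |e + z c| <= 1 for all |z| = 1, and averaging powers
   over roots of unity gives (m+1) |c| <= 1 for all m, so c = 0. *)

Lemma prim_root_exists (C : numClosedFieldType) n :
  (0 < n)%N -> {z : C | n.-primitive_root z}.
Proof.
pose p : {poly C} := 'X^n - 1; have [r Dp] := closed_field_poly_normal p.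
move=> n_gt0; apply/sigW; rewrite (monicP _) ?monicXnsubC // scale1r in Dp.
have rn1: all n.-unity_root r by apply/allP=> z; rewrite -root_prod_XsubC -Dp.
have sz_r: (n < (size r).+1)%N.
  by rewrite -(size_prod_XsubC r id) -Dp size_XnsubC.
have [|z] := hasP (has_prim_root n_gt0 rn1 _ sz_r); last by exists z.
by rewrite -separable_prod_XsubC -Dp separable_Xn_sub_1 // pnatr_eq0 -lt0n.
Qed.

Lemma modc_real (r : Rdefinitions.R) : 0 <= r -> modc (r%:C)%C = r.
Proof. by move=> r0; rewrite /modc /= expr0n /= addr0 sqrtr_sqr ger0_norm. Qed.

Lemma modc_nat k : modc k%:R = k%:R.
Proof.
by rewrite -[k%:R](rmorph_nat (@real_complex Rdefinitions.R)) modc_real ?ler0n.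
Qed.

Lemma modcX z n : modc (z ^+ n) = modc z ^+ n.
Proof.
rewrite /modc; elim: n => [|n IHn]; first by rewrite !expr0 Normc.normc1.
by rewrite !exprS Normc.normcM IHn.
Qed.

Lemma modc_prim_root n (z : CC) : n.-primitive_root z -> modc z = 1.
Proof.
move=> prim_z; have n_gt0 := prim_order_gt0 prim_z.
have modc_ge0 : 0 <= modc z by case: z {prim_z} => a b; apply: sqrtr_ge0.
apply/eqP; rewrite -(pexpr_eq1 n_gt0 modc_ge0) -modcX.
by rewrite (prim_expr_order prim_z) /modc Normc.normc1.
Qed.

Lemma natmul_le1_eq0 (R : archiRealFieldType) (x : R) :
  0 <= x -> (forall m, m%:R * x <= 1) -> x = 0.
Proof.
move=> x_ge0 le1; apply/eqP; rewrite eq_le x_ge0 andbT leNgt; apply/negP => x_gt0.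
have := le1 (Num.Def.archi_bound x^-1).
rewrite -ler_pdivlMr // div1r leNgt => /negP; apply.
by apply: archi_boundP; rewrite invr_ge0 ltW.
Qed.

Lemma scale_combine3 (R : pzRingType) (M : lmodType R) (a1 b1 g1 a2 b2 g2 : R) (x y z : M) :
  (a1 *: x + b1 *: y + g1 *: z) + (a2 *: x + b2 *: y + g2 *: z) =
  (a1 + a2) *: x + (b1 + b2) *: y + (g1 + g2) *: z.
Proof. by rewrite !scalerDl addrACA [X in X + _ = _]addrACA. Qed.

Lemma sum_prim_root_expr (R : idomainType) (om : R) n m : n.-primitive_root om ->
  \sum_(k < n) (om ^+ m) ^+ k = if (n %| m)%N then n%:R else 0.
Proof.
move=> prim_om; case: ifP => [|ndvd].
  rewrite (prim_order_dvd prim_om) => /eqP ->.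
  by rewrite (eq_bigr (fun _ => 1)) ?sumr_const ?card_ord // => i _; rewrite expr1n.
have ne1 : om ^+ m != 1 by rewrite -(prim_order_dvd prim_om) ndvd.
have := subrX1 (om ^+ m) n; rewrite exprAC (prim_expr_order prim_om) expr1n subrr.
by move/esym/eqP; rewrite mulf_eq0 subr_eq0 (negbTE ne1) => /eqP.
Qed.

Lemma dvdn_subnDr n i j : (i < n)%N -> (j < n)%N -> (n %| n - j + i)%N = (i == j).
Proof.
move=> lt_in lt_jn; have [->|ne_ij] := eqVneq i j.
  by rewrite subnK ?dvdnn // ltnW.
apply/negP => /dvdnP [[|[|k]]]; rewrite ?mul0n ?mul1n ?mulSn; move: ne_ij => /eqP; lia.
Qed.

Section CStarAlgebra.
Variables (A : algType CC) (S : cstar_structure A).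
Local Notation star := (cstar S).
Local Notation nrm := (cnorm S).

Definition projection (e : A) := star e = e /\ e * e = e.

Lemma cstar0 : star 0 = 0.
Proof. by have := cstarZ S 0 0; rewrite conjc0 !scale0r. Qed.

Lemma cstarN x : star (- x) = - star x.
Proof. by rewrite -scaleN1r cstarZ rmorphN1 scaleN1r. Qed.

Lemma cstar1 : star 1 = 1.
Proof. by have := cstarM S (star 1) 1; rewrite mulr1 cstarK mulr1. Qed.

Lemma cstarMn x k : star (x *+ k) = star x *+ k.
Proof. by rewrite -[x *+ k]scaler_nat -[star x *+ k]scaler_nat cstarZ conjc_nat. Qed.

Lemma projection1 : projection 1.
Proof. by split; rewrite ?cstar1 ?mulr1. Qed.

Lemma cnorm0 : nrm 0 = 0.
Proof. by have := cnormZ S 0 0; rewrite /modc Normc.normc0 mul0r scale0r. Qed.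

Lemma cnormMn x k : nrm (x *+ k) = k%:R * nrm x.
Proof. by rewrite -scaler_nat cnormZ modc_nat. Qed.

Lemma cnorm_sum_le {I : Type} {r : seq I} {P : pred I} {F : I -> A} {G : I -> Rdefinitions.R} :
  (forall i, P i -> nrm (F i) <= G i) ->
  nrm (\sum_(i <- r | P i) F i) <= \sum_(i <- r | P i) G i.
Proof.
move=> le_FG; apply: (big_ind2 (fun a b => nrm a <= b)); first by rewrite cnorm0.
  by move=> x1 x2 y1 y2 h1 h2; apply: le_trans (cnormD _ _ _) (lerD h1 h2).
exact: le_FG.
Qed.

Lemma cnorm_le1_adj x : nrm (star x * x) <= 1 -> nrm x <= 1.
Proof. by rewrite cnorm_cstar => h; have := cnorm_ge0 S x; nra. Qed.

Lemma cnorm_projection_le1 e : projection e -> nrm e <= 1.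
Proof.
move=> [se ee]; apply: cnorm_le1_adj; rewrite se ee.
by have := cnorm_cstar S e; rewrite se ee => h; have := cnorm_ge0 S e; nra.
Qed.

Lemma cnormX_le1 x n : nrm x <= 1 -> nrm (x ^+ n) <= 1.
Proof.
move=> x_le1; elim: n => [|n IHn].
  by rewrite expr0; apply: cnorm_projection_le1; apply: projection1.
rewrite exprS; apply: le_trans (cnormM _ _ _) _.
by apply: mulr_ile1; rewrite ?cnorm_ge0.
Qed.

Lemma cnorm_avg_le1 k x : nrm x <= k.+1%:R -> nrm ((k.+1%:R : CC)^-1 *: x) <= 1.
Proof.
move=> x_le; rewrite cnormZ /modc Normc.normcV -/(modc _) modc_nat.
by rewrite mulrC ler_pdivrMr ?ltr0n // mul1r.
Qed.

Lemma cnorm_reflection_le1 Q : projection Q -> nrm (1 - Q *+ 2) <= 1.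
Proof.
move=> [sQ QQ]; apply: cnorm_le1_adj.
rewrite cstarD cstarN cstar1 cstarMn sQ mulrBl mul1r mulrBr mulr1.
have -> : Q *+ 2 * (Q *+ 2) = Q *+ 2 + Q *+ 2.
  by rewrite mulrnAl mulrnAr QQ -mulrnA -mulrnDr.
rewrite opprB addrK subrK.
exact: cnorm_projection_le1 projection1.
Qed.

Lemma cnorm_coef_le n (om : CC) (a : nat -> A) j (M : Rdefinitions.R) :
  n.-primitive_root om -> (j < n)%N ->
  (forall k, nrm (\sum_(i < n) (om ^+ k) ^+ i *: a i) <= M) -> nrm (a j) <= M.
Proof.
move=> prim_om lt_jn le_M; have n_gt0 := prim_order_gt0 prim_om.
have extract : \sum_(k < n) om ^+ (k * (n - j)) *: \sum_(i < n) (om ^+ k) ^+ i *: a i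
               = a j *+ n.
  transitivity (\sum_(i < n) (\sum_(k < n) (om ^+ (n - j + i)) ^+ k) *: a i).
    under eq_bigr do rewrite scaler_sumr.
    rewrite exchange_big; apply: eq_bigr => i _; rewrite scaler_suml.
    by apply: eq_bigr => k _; rewrite scalerA -!exprM -exprD -mulnDr mulnC exprM.
  rewrite (bigD1 (Ordinal lt_jn)) //= sum_prim_root_expr // dvdn_subnDr // eqxx.
  rewrite scaler_nat [X in _ + X]big1 ?addr0 // => i ne_ij.
  rewrite sum_prim_root_expr // dvdn_subnDr //.
  have /negbTE -> : (i : nat) != j by exact: ne_ij.
  by rewrite scale0r.
have le_terms (k : 'I_n) : true ->
    nrm (om ^+ (k * (n - j)) *: \sum_(i < n) (om ^+ k) ^+ i *: a i) <= M.
  by move=> _; rewrite cnormZ modcX (modc_prim_root prim_om) expr1n mul1r.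
have := cnorm_sum_le (r := index_enum 'I_n) le_terms.
by rewrite extract cnormMn sumr_const card_ord -[M *+ n]mulr_natl ler_pM2l ?ltr0n.
Qed.

Section Corner.
Variables e c : A.
Hypotheses (proj_e : projection e) (sc : star c = c) (ec : e * c = c) (ce : c * e = c).

Lemma mul_corner (a b g d : CC) :
  (a *: e + b *: c) * (g *: e + d *: c) =
  (a * g) *: e + (a * d + b * g) *: c + (b * d) *: (c * c).
Proof.
have [_ ee] := proj_e.
rewrite mulrDl !mulrDr -!scalerAl -!scalerAr !scalerA ee ec ce.
by rewrite scalerDl [b * g]mulrC !addrA.
Qed.

Lemma expr_corner z n :
  (e + z *: c) ^+ n.+1 = \sum_(i < n.+2) z ^+ i *: (e * c ^+ i *+ 'C(n.+1, i)).
Proof.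
have [_ ee] := proj_e.
have -> : e + z *: c = e * (z *: c + 1) by rewrite mulrDr mulr1 -scalerAr ec addrC.
have e_comm : GRing.comm e (z *: c + 1).
  by rewrite /GRing.comm mulrDr mulrDl mulr1 mul1r -scalerAr -scalerAl ec ce.
have eX : e ^+ n.+1 = e by elim: n => [|n IHn]; rewrite ?expr1 // exprS IHn ee.
rewrite exprMn_comm // eX exprD1n mulr_sumr; apply: eq_bigr => i _.
by rewrite exprZn mulrnAr -scalerAr scalerMnr.
Qed.

Hypotheses (le1_add : nrm (e + c) <= 1) (le1_sub : nrm (e - c) <= 1).

(* The C*-identity turns |z| = 1 into a convex combination of the squares of
   e + c and e - c. *)
Lemma cnorm_corner_unit_le1 z : modc z = 1 -> nrm (e + z *: c) <= 1.
Proof.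
case: z => a b /= modz1.
have ab1 : a ^+ 2 + b ^+ 2 = 1.
  by rewrite -(sqr_sqrtr (addr_ge0 (sqr_ge0 a) (sqr_ge0 b))) modz1 expr1n.
have [a_le1 a_geN1] : a <= 1 /\ -1 <= a by split; nra.
pose al : CC := ((1 + a) / 2)%:C%C; pose be : CC := ((1 - a) / 2)%:C%C.
have square_convex : star (e + (a +i* b)%C *: c) * (e + (a +i* b)%C *: c) =
    al *: ((e + c) * (e + c)) + be *: ((e - c) * (e - c)).
  have [se _] := proj_e.
  have e_plus z : e + z *: c = 1 *: e + z *: c by rewrite scale1r.
  have -> : e + c = 1 *: e + 1 *: c by rewrite !scale1r.
  have -> : e - c = 1 *: e + (-1) *: c by rewrite scale1r scaleN1r.
  rewrite cstarD cstarZ se sc !e_plus !mul_corner.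
  rewrite !scalerDr !scalerA scale_combine3.
  by congr (_ *: _ + _ *: _ + _ *: _);
    apply/eqP; rewrite eq_complex /=; apply/andP; split; apply/eqP; nra.
apply: cnorm_le1_adj; rewrite square_convex; apply: le_trans (cnormD _ _ _) _.
have [al_ge0 be_ge0] : 0 <= (1 + a) / 2 /\ 0 <= (1 - a) / 2 by split; lra.
rewrite !cnormZ !modc_real //.
have := cnormX_le1 2 le1_add; have := cnormX_le1 2 le1_sub; rewrite !expr2; nra.
Qed.

(* Averaging (e + z c)^(m+1) over the (m+2)-th roots of unity z isolates the
   linear coefficient (m+1) c. *)
Lemma corner_contraction_eq0 : c = 0.
Proof.
apply: (@cnorm_eq0 _ S); apply: natmul_le1_eq0 (cnorm_ge0 S c) _ => -[|m].
  by rewrite mul0r ler01.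
have [om prim_om] := prim_root_exists CC (ltn0Sn m.+1).
rewrite -cnormMn; have [_ ee] := proj_e.
have -> : c *+ m.+1 = e * c ^+ 1 *+ 'C(m.+1, 1) by rewrite expr1 ec bin1.
apply: (cnorm_coef_le (a := fun i => e * c ^+ i *+ 'C(m.+1, i)) prim_om) => // k.
rewrite -expr_corner; apply: cnormX_le1; apply: cnorm_corner_unit_le1.
by rewrite modcX (modc_prim_root prim_om) expr1n.
Qed.

End Corner.

(* Take c = 2 y_b / (k + 1), with k the number of other indices: e + c is the
   average of e and the e - 2 y_j (j <> b), and e - c that of e - 2 y_b and
   k copies of e. *)
Lemma corner_reflections_sum_eq0 (J : finType) (K : pred J) e (y : J -> A) :
  projection e -> (forall j, star (y j) = y j) ->
  (forall j, e * y j = y j) -> (forall j, y j * e = y j) ->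
  (forall j, K j -> nrm (e - y j *+ 2) <= 1) ->
  \sum_(j | K j) y j = 0 -> forall b, K b -> y b = 0.
Proof.
move=> proj_e sy ey ye le1 sum0 b Kb; have [se ee] := proj_e.
pose K' := [pred j | K j && (j != b)]; pose k := #|K'|.
have sumK' : \sum_(j in K') y j = - y b.
  move: sum0; rewrite (bigD1 b) //= addrC => /eqP; rewrite addr_eq0 => /eqP <-.
  by apply: eq_bigl => j; rewrite inE.
pose c := (k.+1%:R : CC)^-1 *: (y b *+ 2).
have scale_avg x : (k.+1%:R : CC)^-1 *: (x *+ k.+1) = x.
  by rewrite -scaler_nat scalerA mulVf ?scale1r // pnatr_eq0.
have add_avg : e + c = (k.+1%:R : CC)^-1 *: (e + \sum_(j in K') (e - y j *+ 2)).
  rewrite sumrB sumr_const sumrMnl sumK' mulNrn opprK addrA -mulrS.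
  by rewrite scalerDr scale_avg.
have sub_avg : e - c = (k.+1%:R : CC)^-1 *: ((e - y b *+ 2) + e *+ k).
  by rewrite addrAC -mulrS scalerDr scale_avg scalerN.
have : c = 0.
  apply: (corner_contraction_eq0 proj_e).
  - by rewrite cstarZ conjc_inv conjc_nat cstarMn sy.
  - by rewrite -scalerAr mulrnAr ey.
  - by rewrite -scalerAl mulrnAl ye.
  - rewrite add_avg; apply: cnorm_avg_le1; apply: le_trans (cnormD _ _ _) _.
    rewrite -natr1 addrC lerD ?cnorm_projection_le1 //.
    apply: le_trans (cnorm_sum_le (G := fun _ => 1) _) _ => [j /andP [Kj _]|].
      exact: le1.
    by rewrite sumr_const.
  - rewrite sub_avg; apply: cnorm_avg_le1; apply: le_trans (cnormD _ _ _) _.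
    rewrite -natr1 addrC lerD ?le1 // cnormMn.
    by rewrite -[X in _ <= X]mulr1 ler_wpM2l ?ler0n ?cnorm_projection_le1.
move/eqP; rewrite scaler_eq0 invr_eq0 pnatr_eq0 /= -scaler_nat scaler_eq0.
by rewrite pnatr_eq0 /= => /eqP.
Qed.

Lemma projection_sum1_orth (J : finType) (P : J -> A) :
  (forall j, projection (P j)) -> \sum_j P j = 1 ->
  forall a b, a != b -> P a * P b = 0.
Proof.
move=> projP sum1 a b ne_ab; have [sPa PaPa] := projP a.
pose y j := P a * P j * P a.
have y_b0 : y b = 0.
  apply: (corner_reflections_sum_eq0 (K := [pred j | j != a]) (projP a)) => //.
  - by move=> j; rewrite /y !cstarM (projP j).1 sPa mulrA.
  - by move=> j; rewrite /y !mulrA PaPa.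
  - by move=> j; rewrite /y -mulrA PaPa.
  - move=> j _; have -> : P a - y j *+ 2 = P a * (1 - P j *+ 2) * P a.
      by rewrite mulrBr mulr1 mulrBl PaPa mulrnAr mulrnAl.
    apply: le_trans (cnormM _ _ _) _; apply: mulr_ile1; rewrite ?cnorm_ge0 //.
      apply: le_trans (cnormM _ _ _) _; apply: mulr_ile1; rewrite ?cnorm_ge0 //.
        exact: cnorm_projection_le1.
      exact: cnorm_reflection_le1.
    exact: cnorm_projection_le1.
  - have : \sum_j y j = P a by rewrite /y -mulr_suml -mulr_sumr sum1 mulr1 PaPa.
    rewrite (bigD1 a) //= /y !PaPa => /(congr1 (fun x => x - P a)).
    rewrite addrAC subrr add0r => sum_ne_a.
    by rewrite -[RHS]sum_ne_a; apply: eq_bigl.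
  - by rewrite /= eq_sym.
have PbPa0 : P b * P a = 0.
  apply: (@cnorm_eq0 _ S); apply/eqP; rewrite -sqrf_eq0 -cnorm_cstar.
  rewrite cstarM sPa (projP b).1 mulrA -[P a * P b * P b]mulrA (projP b).2.
  by rewrite -/(y b) y_b0 cnorm0.
by have := cstarM S (P b) (P a); rewrite PbPa0 cstar0 sPa (projP b).1.
Qed.

End CStarAlgebra.

Definition offdiag (V : finType) L (col : colored V L) : V -> V -> option 'I_L :=
  fun a b => if a == b then None else Some (col a b).

Section Preservation.
Variables (A : pzRingType) (V : finType).

Definition preserves (w : V -> V -> A) (U : eqType) (f : V -> V -> U) :=
  forall i j k l, f i k != f j l -> w i j * w k l = 0.

Lemma preserves_coarsen w (U U' : eqType) (f : V -> V -> U) (g : V -> V -> U') :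
  preserves w f -> (forall i k j l, f i k = f j l -> g i k = g j l) ->
  preserves w g.
Proof.
move=> pres_f fg i j k l ne_g; apply: pres_f.
by apply: contra ne_g => /eqP /fg ->.
Qed.

Lemma preserves_pair w (U U' : eqType) (f : V -> V -> U) (g : V -> V -> U') :
  preserves w f -> preserves w g -> preserves w (fun a b => (f a b, g a b)).
Proof.
move=> pres_f pres_g i j k l; rewrite xpair_eqE negb_and.
by case/orP; [apply: pres_f | apply: pres_g].
Qed.

Lemma preserves_tr w (U : eqType) (f : V -> V -> U) :
  preserves w f -> preserves (fun i j => w j i) f.
Proof. by move=> pres_f i j k l ne_f; apply: pres_f; rewrite eq_sym. Qed.

Section ConnectHalf.
Variable w : V -> V -> A.
Hypotheses (row_sum1 : forall i, \sum_j w i j = 1)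
           (row_orth : forall i j l, j != l -> w i j * w i l = 0).

Lemma preserves_connect_half (R : rel V) : preserves w R ->
  forall i j k l, connect R i k -> ~~ connect R j l -> w i j * w k l = 0.
Proof.
move=> pres_R i j k l /connectP [s]; elim: s i j => [|z s IHs] i j /=.
  by move=> _ -> nc_jl; apply: row_orth; apply: contra nc_jl => /eqP ->.
case/andP => R_iz path_zs last_k nc_jl.
rewrite -[w i j]mulr1 -(row_sum1 z) mulr_sumr mulr_suml big1 // => t _.
have [c_tl|nc_tl] := boolP (connect R t l); last first.
  by rewrite -mulrA (IHs z t path_zs last_k nc_tl) mulr0.
rewrite pres_R ?mul0r // R_iz; apply: contra nc_jl => /eqP/esym R_jt.
exact: connect_trans (connect1 R_jt) c_tl.
Qed.

End ConnectHalf.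

Lemma preserves_connect w (R : rel V) :
  (forall i, \sum_j w i j = 1) -> (forall j, \sum_i w i j = 1) ->
  (forall i j l, j != l -> w i j * w i l = 0) ->
  (forall i k j, i != k -> w i j * w k j = 0) ->
  preserves w R -> preserves w (connect R).
Proof.
move=> row_sum1 col_sum1 row_orth col_orth pres_R i j k l.
case: (boolP (connect R i k)) => c_ik; case: (boolP (connect R j l)) => c_jl //= _.
  exact: (preserves_connect_half row_sum1 row_orth pres_R) c_ik c_jl.
have col_orth' a b c : b != c -> w b a * w c a = 0 by exact: col_orth.
exact: (preserves_connect_half col_sum1 col_orth' (preserves_tr pres_R)) c_jl c_ik.
Qed.

End Preservation.

Section MagicBiunitary.
Variables (A : algType CC) (S : cstar_structure A) (V : finType) (w : V -> V -> A).
Hypothesis w_magic : magic_biunitary S w.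

Lemma magic_row_orth i j l : j != l -> w i j * w i l = 0.
Proof.
case: w_magic => w_sa w_idem w_row _.
by apply: (projection_sum1_orth (P := w i)) => // j'; split.
Qed.

Lemma magic_col_orth i k j : i != k -> w i j * w k j = 0.
Proof.
case: w_magic => w_sa w_idem _ w_col.
by apply: (projection_sum1_orth (P := w^~ j)) => // i'; split.
Qed.

Lemma commutes_withP (d : V -> V -> CC) : commutes_with w d <-> preserves w d.
Proof.
have [_ w_idem w_row w_col] := w_magic.
have expand i l : \sum_j w i j * (d j l *: 1) - \sum_j (d i j *: 1) * w j l
    = \sum_j \sum_k (d j l - d i k) *: (w i j * w k l).
  have -> : \sum_j w i j * (d j l *: 1) = \sum_j \sum_k d j l *: (w i j * w k l).
    apply: eq_bigr => j _.
    by rewrite -scalerAr mulr1 -scaler_sumr -mulr_sumr w_col mulr1.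
  have -> : \sum_k (d i k *: 1) * w k l = \sum_j \sum_k d i k *: (w i j * w k l).
    rewrite exchange_big; apply: eq_bigr => k _.
    by rewrite -scalerAl mul1r -scaler_sumr -mulr_suml w_row mul1r.
  rewrite -sumrB; apply: eq_bigr => j _; rewrite -sumrB.
  by apply: eq_bigr => k _; rewrite scalerBl.
have sandwich i j k l (F : V -> V -> CC) :
    w i j * (\sum_j' \sum_k' F j' k' *: (w i j' * w k' l)) * w k l
    = F j k *: (w i j * w k l).
  rewrite mulr_sumr (bigD1 j) //= [X in _ + X]big1 ?addr0 => [|j' ne_j]; last first.
    rewrite mulr_sumr big1 // => k' _.
    by rewrite -scalerAr mulrA magic_row_orth ?mul0r ?scaler0 // eq_sym.
  rewrite mulr_sumr mulr_suml (bigD1 k) //= [X in _ + X]big1 ?addr0 => [|k' ne_k].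
    by rewrite -scalerAr -scalerAl mulrA w_idem -mulrA w_idem.
  by rewrite -scalerAr -scalerAl -!mulrA magic_col_orth // !mulr0 scaler0.
split => [comm_d i j k l ne_d | pres_d i l].
  have := sandwich i j k l (fun j' k' => d j' l - d i k').
  rewrite -expand comm_d subrr mulr0 mul0r => /esym/eqP.
  by rewrite scaler_eq0 subr_eq0 eq_sym (negbTE ne_d) => /eqP.
apply/eqP; rewrite -subr_eq0 expand big1 // => j _; rewrite big1 // => k _.
have [->|ne_d] := eqVneq (d j l) (d i k); first by rewrite subrr scale0r.
by rewrite pres_d ?scaler0 // eq_sym.
Qed.

Lemma preserves_diag : preserves w (fun a b => a == b).
Proof.
move=> i j k l; have [<-|ne_ik] := eqVneq i k; have [<-|ne_jl] := eqVneq j l.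
- by rewrite eqxx.
- by move=> _; apply: magic_row_orth.
- by move=> _; apply: magic_col_orth.
- by rewrite eqxx.
Qed.

Lemma preserves_converse (U : eqType) (f : V -> V -> U) :
  preserves w f -> preserves w (fun a b => f b a).
Proof.
have [w_sa _ _ _] := w_magic.
move=> pres_f i j k l ne_f; have := cstarM S (w k l) (w i j).
by rewrite (pres_f k l i j ne_f) cstar0 !w_sa.
Qed.

Lemma preserves_laplacian L (col : colored V L) (c : 'I_L -> CC) : injective c ->
  preserves w (laplacian col c) <-> preserves w (offdiag col).
Proof.
move=> c_inj; split => pres.
  apply: preserves_coarsen (preserves_pair pres preserves_diag) _.
  move=> i k j l /pair_equal_spec [lap_eq diag_eq].
  rewrite /laplacian /offdiag diag_eq in lap_eq *.
  by case: (j == l) lap_eq => // /c_inj ->.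
apply: preserves_coarsen pres _ => i k j l; rewrite /laplacian /offdiag.
by case: (i == k); case: (j == l) => // -[->].
Qed.

End MagicBiunitary.

Lemma connect_fiber (T Z : finType) (e : rel T) : (forall i j, connect e i j) ->
  forall a b : T * Z, connect [rel a b | (a.2 == b.2) && e a.1 b.1] a b = (a.2 == b.2).
Proof.
move=> e_conn a b; apply/idP/eqP.
  case/connectP => s; elim: s a => [_ _ -> //|c s IHs] a /=.
  by case/andP => /andP [/eqP -> _] path_cs /IHs ->.
case: a b => [i z] [j _] /= <-; have /connectP [s e_s ->] := e_conn i j.
apply/connectP; exists [seq (t, z) | t <- s]; last by rewrite (last_map (fun t => (t, z))).
by elim: s i e_s => //= t s IHs i /andP [e_it e_s]; rewrite eqxx e_it IHs.
Qed.

Section FreeProduct.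
Variables (T Z : finType) (p q : nat) (X : precolored T p) (Y : precolored Z q).
Local Notation colXbarY := (completion (pfree (completion_pre X) Y)).
Local Notation colXY := (completion (pfree X Y)).

Lemma val_colXbarY a b : val (colXbarY a b) =
  if a.2 == b.2 then (if X a.1 b.1 is Some r then val r else p)
  else (if Y a.2 b.2 is Some s then p.+1 + s else p.+1 + q)%N.
Proof.
case: a b => [i z] [j z'] /=; rewrite /completion /pfree /completion_pre /=.
by case: eqP => _ /=; [rewrite /completion; case: (X i j) | case: (Y z z')].
Qed.

Lemma val_colXY a b : val (colXY a b) =
  if a.2 == b.2 then (if X a.1 b.1 is Some r then val r else p + q)%N
  else (if Y a.2 b.2 is Some s then p + s else p + q)%N.
Proof.
case: a b => [i z] [j z'] /=; rewrite /completion /pfree /=.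
by case: eqP => _ /=; [case: (X i j) | case: (Y z z')].
Qed.

Lemma colXbarY_eq a b a' b' :
  (colXbarY a b == colXbarY a' b') =
  (colXY a b == colXY a' b') && ((a.2 == b.2) == (a'.2 == b'.2)).
Proof.
rewrite -!val_eqE /= val_colXbarY val_colXbarY val_colXY val_colXY.
case: (a.2 == b.2); case: (a'.2 == b'.2);
  do ?[case: (X _ _) => [[? ?]|] | case: (Y _ _) => [[? ?]|]];
  rewrite /= ?andbT ?andbF; first [apply/eqP/eqP; lia | apply/eqP; lia].
Qed.

Lemma colXY_lt_p a b : (colXY a b < p)%N = (a.2 == b.2) && (X a.1 b.1 != None).
Proof.
rewrite val_colXY; case: (a.2 == b.2) => /=.
  by case: (X _ _) => [[r lt_rp]|] //=; lia.
by case: (Y _ _) => [[s ?]|] /=; lia.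
Qed.

Lemma offdiag_colXbarY_eq a b a' b' :
  (offdiag colXbarY a b == offdiag colXbarY a' b') =
  (offdiag colXY a b == offdiag colXY a' b') && ((a.2 == b.2) == (a'.2 == b'.2)).
Proof.
rewrite /offdiag; have [<-|_] := eqVneq a b; have [<-|_] := eqVneq a' b' => //=.
  by rewrite !eqxx.
exact: colXbarY_eq.
Qed.

Lemma preserves_fiber (A : algType CC) (S : cstar_structure A)
    (w : T * Z -> T * Z -> A) :
  magic_biunitary S w -> pconnected X -> preserves w (offdiag colXY) ->
  preserves w (fun a b : T * Z => a.2 == b.2).
Proof.
move=> w_magic X_conn pres_off.
pose D a b := (a != b) && (colXY a b < p)%N.
have pres_D : preserves w D.
  apply: preserves_coarsen pres_off _ => i k j l; rewrite /D /offdiag.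
  by case: (i == k); case: (j == l) => // -[->].
pose E := [rel a b | D a b || D b a].
have pres_E : preserves w E.
  apply: preserves_coarsen (preserves_pair pres_D (preserves_converse w_magic pres_D)) _.
  by move=> i k j l /pair_equal_spec [/= -> ->].
have E_lift : E =2 [rel a b | (a.2 == b.2) && pedge X a.1 b.1].
  move=> [i z] [j z']; rewrite /= /D !colXY_lt_p /pedge !xpair_eqE /=.
  rewrite [j == i]eq_sym [z' == z]eq_sym.
  by case: (i == j); case: (z == z').
have [_ _ w_row w_col] := w_magic.
apply: preserves_coarsen (preserves_connect w_row w_col _ _ pres_E) _.
- exact: magic_row_orth w_magic.
- exact: magic_col_orth w_magic.
by move=> i k j l; rewrite !(eq_connect E_lift) !connect_fiber.
Qed.

End FreeProduct.

Theorem proposition7p1 (T Z : finType) (p q : nat)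
  (X : precolored T p) (Y : precolored Z q)
  (c1 : 'I_(p.+1 + q).+1 -> CC) (c2 : 'I_(p + q).+1 -> CC) :
  pconnected X -> injective c1 -> injective c2 ->
  forall (A : algType CC) (S : cstar_structure A)
         (w : (T * Z)%type -> (T * Z)%type -> A),
  magic_biunitary S w ->
  (rel_A (pfree (completion_pre X) Y) c1 w <-> rel_A (pfree X Y) c2 w).
Proof.
move=> X_conn c1_inj c2_inj A S w w_magic; rewrite /rel_A.
apply: (iff_trans (commutes_withP w_magic _)).
apply: (iff_trans (preserves_laplacian w_magic _ c1_inj)).
apply: iff_sym; apply: (iff_trans (commutes_withP w_magic _)).
apply: (iff_trans (preserves_laplacian w_magic _ c2_inj)).
split=> pres.
  apply: preserves_coarsen (preserves_pair pres (preserves_fiber w_magic X_conn pres)) _.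
  move=> i k j l /pair_equal_spec [off_eq fiber_eq].
  by apply/eqP; rewrite offdiag_colXbarY_eq off_eq fiber_eq !eqxx.
apply: preserves_coarsen pres _ => i k j l /eqP.
by rewrite offdiag_colXbarY_eq => /andP [/eqP].
Qed.
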